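(* Let $f_1,f_2:\mathbb R^d\to\mathbb R$ be convex with $\nabla f_i$ globally Lipschitz continuous with modulus $L_i>0$ ($i=1,2$), let $f_3:\mathbb R^d\to\mathbb R\cup\{+\infty\}$ be proper and lower semicontinuous, and assume $\varphi:=f_1+f_2+f_3$ has a nonempty set of minimizers. Let $\gamma\in(0,\frac{1}{L_1+L_2})$ and $\lambda,\alpha>0$, and let $(x_1^k,x_2^k,x_3^k)_k$, $(z_1^k,z_2^k)_k$ be generated by the relaxed Ryu splitting method. Set $\xi^k=\big(x_1^k,x_2^k,x_3^k,\gamma^{-1}(x_1^k-z_1^k),\gamma^{-1}(\alpha(x_2^k-x_1^k)-z_2^k)\big)$. Then for all $k\ge1$, $\varphi_\gamma^{\mathrm{Ryu}}(z_1^k,z_2^k)=\mathcal L_{1/\gamma_1,1/\gamma_2}(\xi^k)$, where $\gamma_1=\gamma/\alpha$, $\gamma_2=\gamma/(1-\alpha)$.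
   Context: For $h:\mathbb R^d\to\mathbb R\cup\{+\infty\}$ and $\gamma>0$, $\mathrm{prox}_{\gamma h}(z):=\operatorname{argmin}_{y}\{h(y)+\frac{1}{2\gamma}\|y-z\|^2\}$. Conventions $\frac{c}{0}=\infty$, $\frac{d}{\infty}=0$ ($c>0,d\in\mathbb R$). The relaxed Ryu splitting method: given $z_1^0,z_2^0\in\mathbb R^d$, for $k\ge0$, $x_1^k=\mathrm{prox}_{\gamma f_1}(z_1^k)$, $x_2^k=\mathrm{prox}_{\frac{\gamma}{\alpha}f_2}(\frac{z_2^k}{\alpha}+x_1^k)$, $x_3^k\in\mathrm{prox}_{\gamma f_3}(x_1^k-z_1^k+x_2^k-z_2^k)$, $z_1^{k+1}=z_1^k+\lambda(x_3^k-x_1^k)$, $z_2^{k+1}=z_2^k+\lambda(x_3^k-x_2^k)$. Relaxed Ryu envelope: for $(z_1,z_2)$, $x_1=\mathrm{prox}_{\gamma f_1}(z_1)$, $x_2=\mathrm{prox}_{\frac{\gamma}{\alpha}f_2}(\frac{z_2}{\alpha}+x_1)$, $\varphi_\gamma^{\mathrm{Ryu}}(z_1,z_2):=\min_{y}\{f_3(y)+\sum_{i=1}^2[f_i(x_i)+\langle y-x_i,\nabla f_i(x_i)\rangle+\frac{1}{2\gamma_i}\|y-x_i\|^2]\}$. Augmented Lagrangian: $\mathcal L_{\beta_1,\beta_2}(x_1,x_2,x_3,\mu_1,\mu_2)=f_3(x_3)+\sum_{i=1}^2\big(f_i(x_i)+\langle\mu_i,x_i-x_3\rangle+\frac{\beta_i}{2}\|x_i-x_3\|^2\big)$.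 *)

From HB Require Import structures.
From mathcomp Require Import all_boot all_order all_algebra.
From mathcomp Require Import all_classical all_reals all_analysis.
Set Implicit Arguments. Unset Strict Implicit. Unset Printing Implicit Defensive.
Import Order.TTheory GRing.Theory Num.Theory.
Import numFieldNormedType.Exports.
Local Open Scope classical_set_scope.
Local Open Scope ring_scope.

Section Defs.
Variables (R : realType) (d : nat).
Notation V := 'rV[R]_d.

(* Euclidean inner product and squared Euclidean norm on R^d
   (NB: the library norm on 'rV is the max norm, so we use these instead). *)
Definition inner (u v : V) : R := \sum_(i < d) u ord0 i * v ord0 i.
Definition sqnorm (u : V) : R := inner u u.
Definition enorm (u : V) : R := Num.sqrt (sqnorm u).

Definition convex_fun (f : V -> R) : Prop :=
  forall (x y : V) (t : R), 0 <= t -> t <= 1 ->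
    f (t *: x + (1 - t) *: y) <= t * f x + (1 - t) * f y.

Definition is_gradient (f : V -> R) (g : V -> V) : Prop :=
  forall x, differentiable f x /\ forall h, 'd f x h = inner (g x) h.

Definition lipschitz_mod (g : V -> V) (L : R) : Prop :=
  forall x y, enorm (g x - g y) <= L * enorm (x - y).

Definition proper_fun (h : V -> \bar R) : Prop :=
  (exists x, h x \is a fin_num) /\ (forall x, h x != -oo%E).

Definition prox_set (gamma : R) (h : V -> \bar R) (z : V) : set V :=
  [set x | forall y, (h x + (sqnorm (x - z) / (2 * gamma))%:E
                      <= h y + (sqnorm (y - z) / (2 * gamma))%:E)%E].

(* the (single-valued, for convex smooth h) proximal map; chosen element *)
Definition prox (gamma : R) (h : V -> \bar R) (z : V) : V :=
  xget 0 (prox_set gamma h z).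

(* Relaxed Ryu envelope.  ig1 = 1/gamma_1 = alpha/gamma and
   ig2 = 1/gamma_2 = (1-alpha)/gamma (conventions c/0 = oo, d/oo = 0),
   so 1/(2 gamma_i) = ig_i / 2.  The min over y is rendered as an infimum. *)
Definition ryu_env (gamma alpha : R) (f1 f2 : V -> R) (f3 : V -> \bar R)
    (g1 g2 : V -> V) (z1 z2 : V) : \bar R :=
  let x1 := prox gamma (fun x => (f1 x)%:E) z1 in
  let x2 := prox (gamma / alpha) (fun x => (f2 x)%:E) (alpha^-1 *: z2 + x1) in
  let ig1 := alpha / gamma in
  let ig2 := (1 - alpha) / gamma in
  ereal_inf [set (f3 y
     + (f1 x1 + inner (y - x1) (g1 x1) + ig1 / 2 * sqnorm (y - x1)
      + (f2 x2 + inner (y - x2) (g2 x2) + ig2 / 2 * sqnorm (y - x2)))%:E)%E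
   | y in [set: V]].

Definition aug_lag (beta1 beta2 : R) (f1 f2 : V -> R) (f3 : V -> \bar R)
    (x1 x2 x3 mu1 mu2 : V) : \bar R :=
  (f3 x3 + (f1 x1 + inner mu1 (x1 - x3) + beta1 / 2 * sqnorm (x1 - x3)
          + (f2 x2 + inner mu2 (x2 - x3) + beta2 / 2 * sqnorm (x2 - x3)))%:E)%E.

End Defs.

From HB Require Import structures.
From mathcomp Require Import all_boot all_order all_algebra.
From mathcomp Require Import all_classical all_reals all_analysis.
From mathcomp Require Import ring lra.
Set Implicit Arguments. Unset Strict Implicit. Unset Printing Implicit Defensive.
Import Order.TTheory GRing.Theory Num.Theory.
Import numFieldNormedType.Exports.
Local Open Scope classical_set_scope.
Local Open Scope ring_scope.

(* At the prox points the first-order conditions give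
   grad f1 (x1) = (z1 - x1) / gamma and grad f2 (x2) = (alpha / gamma) (z2 / alpha + x1 - x2).
   Since the curvatures alpha / gamma and (1 - alpha) / gamma add up to 1 / gamma, the sum of
   the two quadratic models inside the envelope then differs from
   ||y - w||^2 / (2 gamma), w = x1 - z1 + x2 - z2, by a constant, so the infimum over y is
   attained at x3 = prox_{gamma f3}(w).  Evaluating the models at x3 gives the augmented
   Lagrangian with multipliers mu_i = - grad f_i (x_i). *)

Lemma derive_ge_of_quotient_lbound {R : realType} {V : normedModType R}
    (f : V -> R) (x h : V) (m K : R) :
  derivable f x h ->
  (forall s, 0 < s -> m - s * K <= s^-1 * (f (s *: h + x) - f x)) ->
  m <= 'D_h f x.
Proof.
move=> fx_h lbound.
have q_cvg : s^-1 *: ((f \o shift x) (s *: h) - f x) + s * K @[s --> 0^'+]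
    --> 'D_h f x + 0 * K.
  apply: cvgD; first exact: cvg_dnbhs_at_right.
  by apply: cvgMr_tmp; apply: cvg_at_right_filter; exact: cvg_id.
rewrite -[leRHS]addr0 -[X in _ + X](mul0r K).
apply: (closed_cvg _ (@closed_ge R m) _ _ q_cvg).
near=> s; have s_gt0 : 0 < s by near: s; exact: nbhs_right_gt.
by rewrite /= -lerBlDr; exact: lbound.
Unshelve. all: by end_near. Qed.

Section Euclidean.
Variables (R : realType) (d : nat).
Implicit Types (u v w : 'rV[R]_d).

Lemma innerC u v : inner u v = inner v u.
Proof. by apply: eq_bigr => i _; rewrite mulrC. Qed.

Lemma innerDl u v w : inner (u + v) w = inner u w + inner v w.
Proof. by rewrite /inner -big_split; apply: eq_bigr => i _; rewrite mxE mulrDl. Qed.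

Lemma innerZl (a : R) u v : inner (a *: u) v = a * inner u v.
Proof. by rewrite /inner mulr_sumr; apply: eq_bigr => i _; rewrite mxE mulrA. Qed.

Lemma innerNl u v : inner (- u) v = - inner u v.
Proof. by rewrite /inner -sumrN; apply: eq_bigr => i _; rewrite mxE mulNr. Qed.

Lemma innerNr u v : inner u (- v) = - inner u v.
Proof. by rewrite innerC innerNl innerC. Qed.

Lemma sqnormN u : sqnorm (- u) = sqnorm u.
Proof. by rewrite /sqnorm innerNl innerNr opprK. Qed.

Lemma sqnorm_ge0 u : 0 <= sqnorm u.
Proof. by apply: sumr_ge0 => i _; rewrite -expr2 sqr_ge0. Qed.

Lemma sqnorm_eq0 u : (sqnorm u == 0) = (u == 0).
Proof.
apply/idP/eqP => [|->]; last by rewrite /sqnorm /inner big1 // => i _; rewrite mxE mul0r.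
rewrite psumr_eq0 => [/allP u_eq0|i _]; last by rewrite -expr2 sqr_ge0.
apply/rowP => i; rewrite mxE.
by apply/eqP; rewrite -sqrf_eq0 expr2; exact: u_eq0 (mem_index_enum i).
Qed.

Lemma sqnormDZl (s : R) u v :
  sqnorm (s *: u + v) = sqnorm v + 2 * s * inner v u + s ^+ 2 * sqnorm u.
Proof.
rewrite /sqnorm /inner !mulr_sumr -!big_split; apply: eq_bigr => i _.
by rewrite /= !mxE; ring.
Qed.

Lemma sqnorm_midpoint u v w :
  sqnorm ((1 / 2 : R) *: u + (1 - 1 / 2) *: v - w) =
  sqnorm (u - w) / 2 + sqnorm (v - w) / 2 - sqnorm (u - v) / 4.
Proof.
rewrite /sqnorm /inner !mulr_suml -big_split -sumrB; apply: eq_bigr => i _.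
by rewrite /= !mxE; field.
Qed.

End Euclidean.

Section Prox.
Variables (R : realType) (d : nat).
Notation V := 'rV[R]_d.

Lemma prox_set_real_min (f : V -> R) (c : R) (z a : V) :
  prox_set c (fun x => (f x)%:E) z a ->
  forall y, f a + sqnorm (a - z) / (2 * c) <= f y + sqnorm (y - z) / (2 * c).
Proof. by move=> min_a y; have := min_a y; rewrite -!EFinD lee_fin. Qed.

Lemma prox_set_convex_uniq (f : V -> R) (c : R) (z a b : V) :
  0 < c -> convex_fun f ->
  prox_set c (fun x => (f x)%:E) z a -> prox_set c (fun x => (f x)%:E) z b ->
  a = b.
Proof.
move=> c_gt0 cvx_f /prox_set_real_min min_a /prox_set_real_min min_b.
(* The prox objective is strongly convex: at the midpoint of a and b it lies
   ||a - b||^2 / (8 c) below the average of its values at a and b. *)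
have := min_a ((1 / 2 : R) *: a + (1 - 1 / 2) *: b).
have := cvx_f a b (1 / 2) ltac:(lra) ltac:(lra).
have := min_b a.
rewrite sqnorm_midpoint => ba mid_cvx mid_min.
have c2_gt0 : 0 < (2 * c)^-1 by rewrite invr_gt0 mulr_gt0.
have : sqnorm (a - b) == 0.
  by rewrite eq_le sqnorm_ge0 andbT -(pmulr_lle0 _ c2_gt0); lra.
by rewrite sqnorm_eq0 subr_eq0 => /eqP.
Qed.

Lemma proxE (f : V -> R) (c : R) (z a : V) :
  0 < c -> convex_fun f -> prox_set c (fun x => (f x)%:E) z a ->
  prox c (fun x => (f x)%:E) z = a.
Proof.
move=> c_gt0 cvx_f min_a; apply: (prox_set_convex_uniq c_gt0 cvx_f _ min_a).
by apply: xgetPex; exists a.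
Qed.

Lemma prox_set_gradient (f : V -> R) (g : V -> V) (c : R) (z x : V) :
  0 < c -> is_gradient f g -> prox_set c (fun y => (f y)%:E) z x ->
  g x = c^-1 *: (z - x).
Proof.
move=> c_gt0 grad_f /prox_set_real_min min_x.
have [dfx dfE] := grad_f x.
(* u is the gradient of the prox objective at x: minimality gives <u, h> >= 0
   for every h, and h = - u forces u = 0. *)
set u := g x + c^-1 *: (x - z).
have u_ge0 h : 0 <= inner u h.
  suff : - (inner (x - z) h / c) <= 'D_h f x.
    by rewrite deriveE // dfE => ?; rewrite /u innerDl innerZl; lra.
  apply: (derive_ge_of_quotient_lbound (K := sqnorm h / (2 * c))).
    exact: diff_derivable.
  move=> s s_gt0; rewrite ler_pdivlMl //.
  have := min_x (s *: h + x); rewrite -addrA sqnormDZl.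
  have -> : (sqnorm (x - z) + 2 * s * inner (x - z) h + s ^+ 2 * sqnorm h) / (2 * c)
      = sqnorm (x - z) / (2 * c) - s * (- (inner (x - z) h / c) - s * (sqnorm h / (2 * c))).
    by field; rewrite gt_eqF.
  lra.
have : u == 0.
  by rewrite -sqnorm_eq0 eq_le sqnorm_ge0 andbT -oppr_ge0 -innerNr u_ge0.
by rewrite /u addr_eq0 -scalerN opprB => /eqP.
Qed.

Lemma ereal_inf_prox_shift (h : V -> \bar R) (c : R) (w x : V) (Q : V -> R) :
  prox_set c h w x ->
  (forall y, Q y - sqnorm (y - w) / (2 * c) = Q x - sqnorm (x - w) / (2 * c)) ->
  ereal_inf [set (h y + (Q y)%:E)%E | y in [set: V]] = (h x + (Q x)%:E)%E.
Proof.
move=> min_x Q_shift; apply/eqP; rewrite eq_le; apply/andP; split.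
  by apply: ereal_inf_lbound; exists x.
apply: le_ereal_inf_tmp => _ [y _ <-].
set C := Q x - sqnorm (x - w) / (2 * c).
have -> : Q y = C + sqnorm (y - w) / (2 * c) by rewrite /C -(Q_shift y) subrK.
have -> : Q x = C + sqnorm (x - w) / (2 * c) by rewrite subrK.
by rewrite !EFinD !(addeC C%:E) !addeA leeD2r.
Qed.

End Prox.

Section RyuEnvelope.
Variables (R : realType) (d : nat).
Notation V := 'rV[R]_d.

(* The model f_i(x_i) + <y - x_i, grad f_i(x_i)> + ||y - x_i||^2 / (2 gamma_i) of the
   envelope, with F = f_i(x_i), v = grad f_i(x_i) and b = 1 / gamma_i. *)
Definition quad_model (F : R) (a v : V) (b : R) (y : V) : R :=
  F + inner (y - a) v + b / 2 * sqnorm (y - a).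

Lemma quad_model_sum_shift (F1 F2 b1 b2 c : R) (a1 a2 v1 v2 w y y' : V) :
  c != 0 -> b1 + b2 = c^-1 ->
  v1 - b1 *: a1 + (v2 - b2 *: a2) = - (c^-1 *: w) ->
  quad_model F1 a1 v1 b1 y + quad_model F2 a2 v2 b2 y - sqnorm (y - w) / (2 * c) =
  quad_model F1 a1 v1 b1 y' + quad_model F2 a2 v2 b2 y' - sqnorm (y' - w) / (2 * c).
Proof.
move=> c_neq0 b12 v12.
have b2E : b2 = c^-1 - b1 by rewrite -b12; ring.
have v2E i : v2 ord0 i = - c^-1 * w ord0 i - v1 ord0 i + b1 * a1 ord0 i + b2 * a2 ord0 i.
  by move/matrixP/(_ ord0 i): v12; rewrite !mxE; lra.
have sumE y0 : quad_model F1 a1 v1 b1 y0 + quad_model F2 a2 v2 b2 y0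
    - sqnorm (y0 - w) / (2 * c) = F1 + F2 + \sum_(i < d)
    ((y0 - a1) ord0 i * v1 ord0 i + b1 / 2 * ((y0 - a1) ord0 i * (y0 - a1) ord0 i)
     + (y0 - a2) ord0 i * v2 ord0 i + b2 / 2 * ((y0 - a2) ord0 i * (y0 - a2) ord0 i)
     - (y0 - w) ord0 i * (y0 - w) ord0 i / (2 * c)).
  by rewrite /quad_model /sqnorm /inner sumrB !big_split /= -!mulr_sumr -mulr_suml; ring.
rewrite !sumE; congr (_ + _); apply: eq_bigr => i _.
by rewrite !mxE !v2E b2E; field.
Qed.

Lemma ryu_envE (f1 f2 : V -> R) (g1 g2 : V -> V) (f3 : V -> \bar R)
    (gamma alpha : R) (z1 z2 x1 x2 x3 : V) :
  convex_fun f1 -> convex_fun f2 -> is_gradient f1 g1 -> is_gradient f2 g2 ->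
  0 < gamma -> 0 < alpha ->
  prox_set gamma (fun x => (f1 x)%:E) z1 x1 ->
  prox_set (gamma / alpha) (fun x => (f2 x)%:E) (alpha^-1 *: z2 + x1) x2 ->
  prox_set gamma f3 (x1 - z1 + x2 - z2) x3 ->
  ryu_env gamma alpha f1 f2 f3 g1 g2 z1 z2 =
  aug_lag (alpha / gamma) ((1 - alpha) / gamma) f1 f2 f3 x1 x2 x3
    (gamma^-1 *: (x1 - z1)) (gamma^-1 *: (alpha *: (x2 - x1) - z2)).
Proof.
move=> cvx1 cvx2 grad1 grad2 gamma_gt0 alpha_gt0 prox_x1 prox_x2 prox_x3.
have gamma_neq0 : gamma != 0 by rewrite gt_eqF.
have alpha_neq0 : alpha != 0 by rewrite gt_eqF.
have ga_gt0 : 0 < gamma / alpha by rewrite divr_gt0.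
have g1E := prox_set_gradient gamma_gt0 grad1 prox_x1.
have g2E := prox_set_gradient ga_gt0 grad2 prox_x2.
rewrite /ryu_env /= (proxE gamma_gt0 cvx1 prox_x1) (proxE ga_gt0 cvx2 prox_x2).
rewrite (ereal_inf_prox_shift (Q := fun y => quad_model (f1 x1) x1 (g1 x1) (alpha / gamma) y
    + quad_model (f2 x2) x2 (g2 x2) ((1 - alpha) / gamma) y) prox_x3); last first.
  move=> y; apply: quad_model_sum_shift => //; first by field.
  by apply/matrixP => i j; rewrite g1E g2E !mxE; field; rewrite gamma_neq0 alpha_neq0.
have mu1E : gamma^-1 *: (x1 - z1) = - g1 x1 by rewrite g1E -scalerN opprB.
have mu2E : gamma^-1 *: (alpha *: (x2 - x1) - z2) = - g2 x2.
  by apply/matrixP => i j; rewrite g2E !mxE; field; rewrite gamma_neq0 alpha_neq0.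
rewrite /aug_lag /quad_model mu1E mu2E -!(opprB x3) !innerNl !innerNr !opprK !sqnormN.
by rewrite !(innerC (_ - _)).
Qed.

End RyuEnvelope.

Theorem lemma6 (R : realType) (d : nat)
  (f1 f2 : 'rV[R]_d -> R) (g1 g2 : 'rV[R]_d -> 'rV[R]_d) (L1 L2 : R)
  (f3 : 'rV[R]_d -> \bar R)
  (gamma lambda alpha : R)
  (x1 x2 x3 z1 z2 : nat -> 'rV[R]_d) :
  convex_fun f1 -> convex_fun f2 ->
  is_gradient f1 g1 -> is_gradient f2 g2 ->
  0 < L1 -> 0 < L2 -> lipschitz_mod g1 L1 -> lipschitz_mod g2 L2 ->
  proper_fun f3 -> lower_semicontinuous f3 ->
  (exists xs : 'rV[R]_d, forall x : 'rV[R]_d,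
      ((f1 xs + f2 xs)%:E + f3 xs <= (f1 x + f2 x)%:E + f3 x)%E) ->
  0 < gamma -> gamma < 1 / (L1 + L2) -> 0 < lambda -> 0 < alpha ->
  (forall k, prox_set gamma (fun x => (f1 x)%:E) (z1 k) (x1 k)) ->
  (forall k, prox_set (gamma / alpha) (fun x => (f2 x)%:E)
                 (alpha^-1 *: z2 k + x1 k) (x2 k)) ->
  (forall k, prox_set gamma f3 (x1 k - z1 k + x2 k - z2 k) (x3 k)) ->
  (forall k, z1 k.+1 = z1 k + lambda *: (x3 k - x1 k)) ->
  (forall k, z2 k.+1 = z2 k + lambda *: (x3 k - x2 k)) ->
  forall k, (1 <= k)%N ->
    ryu_env gamma alpha f1 f2 f3 g1 g2 (z1 k) (z2 k) =
    aug_lag (alpha / gamma) ((1 - alpha) / gamma) f1 f2 f3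
      (x1 k) (x2 k) (x3 k)
      (gamma^-1 *: (x1 k - z1 k))
      (gamma^-1 *: (alpha *: (x2 k - x1 k) - z2 k)).
Proof.
move=> cvx1 cvx2 grad1 grad2 _ _ _ _ _ _ _ gamma_gt0 _ _ alpha_gt0
  prox_x1 prox_x2 prox_x3 _ _ k _.
exact: ryu_envE.
Qed.
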